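(* Let $q$ be a power of an odd prime, write $q-1=2^s r$ with $r$ odd, let $a\in\mathbb{F}_q^*$ with $a\neq\pm1$, and let $f(X)=X^{q+1}+aX^2$ on $\mathbb{F}_{q^2}$. Note $f(\mathbb{F}_q)\subseteq\mathbb{F}_q$ and $f|_{\mathbb{F}_q}(x)=(a+1)x^2$. Suppose $\chi_2(1-a^2)=1$. Then the union of the connected components of the functional graph of $f$ over $\mathbb{F}_{q^2}$ that contain elements of $\mathbb{F}_q$ is obtained from the functional graph $\mathscr{G}(f|_{\mathbb{F}_q})$ of $x\mapsto(a+1)x^2$ on $\mathbb{F}_q$ by attaching, to every vertex $\alpha\in\mathbb{F}_q$ with $\chi_2(\alpha(a-1))=-1$, two new vertices each having an edge directed to $\alpha$ (and these new vertices have no preimages). In particular, $0$ is a fixed point whose connected component is $\{0\}$ alone, and $\frac{1}{a+1}$ is a fixed point whose connected component consists, if $s=1$, of $\frac1{a+1}$ together with exactly three other vertices each directed to $\frac{1}{a+1}$ and each having no preimage, and, if $s\ge2$, is isomorphic to $(Cyc(1),\mathscr{T}(s+1))$.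
   Context: $\chi_2$ is the quadratic character of $\mathbb{F}_q$: $\chi_2(\alpha)=1$ if $\alpha$ is a nonzero square, $-1$ if $\alpha$ is a nonsquare, $0$ if $\alpha=0$. The functional graph of a map $g$ on a finite set $S$ is the directed graph with vertex set $S$ and edges $x\to g(x)$. $Cyc(1)$ is a vertex with a loop. $\mathscr{T}(1)$ is the tree with two vertices $P_1,P$ and the edge $P_1\to P$ (root $P$); for $m\ge1$, $\mathscr{T}(m+1)$ is obtained from $\mathscr{T}(m)$ by attaching two new vertices, each with an edge directed to it, to every vertex of the last (top) level of $\mathscr{T}(m)$. $(Cyc(1),\mathscr{T}(m))$ is the fixed vertex with a copy of $\mathscr{T}(m)$ whose root is that vertex. *)

From HB Require Import structures.
From mathcomp Require Import all_boot all_order all_algebra.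
Set Implicit Arguments. Unset Strict Implicit. Unset Printing Implicit Defensive.
Import Order.TTheory GRing.Theory Num.Theory.
Local Open Scope ring_scope.

Definition inFq (L : finFieldType) (q : nat) (x : L) : bool := x ^+ q == x.

(* Quadratic character of F_q, evaluated on elements of F_q (viewed inside L):
   1 on nonzero squares OF F_q, -1 on nonsquares of F_q, 0 at 0. *)
Definition chi2 (L : finFieldType) (q : nat) (x : L) : int :=
  if x == 0 then 0%R
  else if [exists b : L, inFq q b && (b ^+ 2 == x)] then 1%R else (-1)%R.

Definition fcomp (L : finType) (g : L -> L) (x y : L) : bool :=
  connect [rel u v | (g u == v) || (g v == u)] x y.

(* Model of (Cyc(1), T(m)) for m >= 1.
   Vertices: None = the root P (carrying the loop);
   Some w with w : seq bool, size w < m : Some [::] = P_1 (level 1),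
   Some w with size w = k is at level k+1 (the two children of Some w are
   Some (true :: w) and Some (false :: w)). *)
Definition cycT_vert (m : nat) (v : option (seq bool)) : bool :=
  if v is Some w then (size w < m)%N else true.

Definition cycT_map (v : option (seq bool)) : option (seq bool) :=
  match v with
  | None => None
  | Some [::] => None
  | Some (_ :: w) => Some w
  end.

Definition iso_cycT (L : finType) (g : L -> L) (C : pred L) (m : nat) : Prop :=
  exists phi : option (seq bool) -> L,
    [/\ {in cycT_vert m &, injective phi},
        (forall v, cycT_vert m v -> C (phi v)),
        (forall y, C y -> exists2 v, cycT_vert m v & phi v = y) &
        (forall v, cycT_vert m v -> phi (cycT_map v) = g (phi v))].

From HB Require Import structures.
From mathcomp Require Import all_boot all_order all_algebra all_fingroup all_solvable all_field.
From mathcomp Require Import ring zify.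
Import Order.TTheory GRing.Theory Num.Theory.
Set Implicit Arguments. Unset Strict Implicit.

(* Write Fq for the fixed field of x |-> x^q and call x skew when x^q = -x.
   Since f(x)^q - f(x) = a ((x^q)^2 - x^2), f(x) lies in Fq exactly when x is in
   Fq or skew, and there f is x |-> (a+1) x^2, resp. x |-> (a-1) x^2.  If
   1 - a^2 = b^2 with b in Fq, a nonzero skew y has no preimage: f(z) = y forces
   (a z^q + z)^2 = (b z)^2, so z^q = +-z.  Hence the components meeting Fq
   consist of Fq and skew leaves, the two roots of (a-1) y^2 = alpha above each
   alpha with (a-1) alpha a nonsquare.  For c = 1/(a+1): if s = 1 then -1 is a
   nonsquare in Fq and the component is {c, -c, d, -d} with (a-1) d^2 = c; if
   s >= 2, a primitive 2^(s+1)-th root of unity w is skew, and with e in Fq,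
   (a-1) e^2 = c, the points psi j = c w^j (j even), e w^j (j odd) exhaust the
   component and satisfy f (psi j) = psi (2 j): the component is the doubling
   map on Z/2^(s+1), which is (Cyc(1), T(s+1)). *)

(** * Coding (Cyc(1), T(s+1)) by doubling modulo 2^(s+1) *)

Section DyadicCode.
Local Open Scope nat_scope.

Fixpoint odd_code (w : seq bool) : nat :=
  if w is b :: w' then odd_code w' + b * 2 ^ (size w').+1 else 1.

Lemma odd_code_odd w : odd (odd_code w).
Proof. by elim: w => //= b w IH; rewrite oddD IH oddM oddX andbF. Qed.

Lemma odd_code_lt w : odd_code w < 2 ^ (size w).+1.
Proof.
elim: w => //= b w IH; rewrite [2 ^ (size w).+2]expnS.
by move: IH; case: b => /=; lia.
Qed.

Lemma odd_code_inj w1 w2 : size w1 = size w2 -> odd_code w1 = odd_code w2 -> w1 = w2.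
Proof.
elim: w1 w2 => [|b1 w1 IH] [|b2 w2] //= [sz12].
have lt1 := odd_code_lt w1; have lt2 := odd_code_lt w2.
rewrite -sz12 in lt2 *; case: b1; case: b2 => /= E; try lia;
  by rewrite (IH w2) //; lia.
Qed.

Lemma odd_code_surj k m : odd m -> m < 2 ^ k.+1 ->
  exists2 w, size w = k & odd_code w = m.
Proof.
elim: k m => [|k IH] m om ltm.
  by exists [::] => //; move: om ltm; case: m => [|[|]].
have [lt | ge] := ltnP m (2 ^ k.+1).
  by have [w <- <-] := IH m om lt; exists (false :: w); rewrite //= addn0.
have om' : odd (m - 2 ^ k.+1) by rewrite oddB // om oddX.
have [|w sz Ew] := IH _ om'; first by move: ltm; rewrite [2 ^ k.+2]expnS; lia.
by exists (true :: w); rewrite /= sz ?Ew //; lia.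
Qed.

Lemma eq_2adic e1 e2 m1 m2 : odd m1 -> odd m2 ->
  2 ^ e1 * m1 = 2 ^ e2 * m2 -> e1 = e2 /\ m1 = m2.
Proof.
have logE e m : odd m -> logn 2 (2 ^ e * m) = e.
  by move=> om; rewrite mulnC logn_Gauss ?coprime2n // pfactorK.
move=> o1 o2 E; have e12 : e1 = e2 by rewrite -(logE e1 m1) // E logE.
by split=> //; apply/eqP; rewrite -(eqn_pmul2l (expn_gt0 2 e1)) E e12.
Qed.

(* The root is coded by 0 and [Some w] by 2^(s - size w) times the odd number
   whose binary digits are w followed by a final 1; then [cycT_map] becomes
   doubling mod 2^(s+1). *)
Definition vert_code (s : nat) (v : option (seq bool)) : nat :=
  if v is Some w then 2 ^ (s - size w) * odd_code w else 0.

Lemma vert_code_lt s v : cycT_vert s.+1 v -> vert_code s v < 2 ^ s.+1.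
Proof.
case: v => [w /= lt_w_s|] /=; last by rewrite expn_gt0.
have -> : 2 ^ s.+1 = 2 ^ (s - size w) * 2 ^ (size w).+1.
  by rewrite -expnD; congr (_ ^ _); lia.
by rewrite ltn_pmul2l ?expn_gt0 // odd_code_lt.
Qed.

Lemma vert_code_map s v : cycT_vert s.+1 v ->
  vert_code s (cycT_map v) = 2 * vert_code s v %[mod 2 ^ s.+1].
Proof.
case: v => [[|b w]|] //= lt_w_s.
  by rewrite subn0 muln1 -expnS modnn mod0n.
have le_w_s : size w < s by lia.
have E2 : 2 * 2 ^ (s - (size w).+1) * 2 ^ (size w).+1 = 2 ^ s.+1.
  by rewrite -expnS -expnD; congr (2 ^ _); lia.
rewrite -(subnSK le_w_s) expnS -mulnA !mulnDr.
have -> : 2 * (2 ^ (s - (size w).+1) * (b * 2 ^ (size w).+1)) = b * 2 ^ s.+1.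
  by rewrite -E2; lia.
by rewrite [in RHS]addnC modnMDl.
Qed.

Lemma vert_code_inj s v1 v2 : cycT_vert s.+1 v1 -> cycT_vert s.+1 v2 ->
  vert_code s v1 = vert_code s v2 -> v1 = v2.
Proof.
have code_gt0 w : 0 < 2 ^ (s - size w) * odd_code w.
  by rewrite muln_gt0 expn_gt0 /=; case: (odd_code w) (odd_code_odd w).
case: v1 => [w1|]; case: v2 => [w2|] //= lt1 lt2.
- by case/(eq_2adic (odd_code_odd _) (odd_code_odd _)) => e12 /odd_code_inj -> //; lia.
- by move=> E; move: (code_gt0 w1); rewrite E.
- by move=> E; move: (code_gt0 w2); rewrite -E.
Qed.

Lemma vert_code_surj s i : i < 2 ^ s.+1 ->
  exists2 v, cycT_vert s.+1 v & vert_code s v = i.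
Proof.
move=> lt_i; have [-> | i_gt0] := posnP i; first by exists None.
have [m odd_m Ei] := pfactor_coprime (isT : prime 2) i_gt0.
rewrite coprime2n in odd_m; set e := logn 2 i in Ei.
have le_e : e <= s.
  rewrite -ltnS -(ltn_exp2l _ _ (isT : 1 < 2)); apply: leq_ltn_trans lt_i.
  by apply: dvdn_leq => //; rewrite Ei dvdn_mull.
have [|w sz_w Ew] := odd_code_surj (k := s - e) odd_m.
  rewrite -(ltn_pmul2r (expn_gt0 2 e)) -Ei -expnD.
  by congr (_ < 2 ^ _) : lt_i; lia.
exists (Some w); first by rewrite /= sz_w; lia.
by rewrite /= sz_w Ew subKn // mulnC.
Qed.

End DyadicCode.

Lemma iso_cycT_doubling (T : finType) (g : T -> T) (C : pred T) s
    (phi : nat -> T) :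
  (forall i j, (phi i == phi j) = (i == j %[mod 2 ^ s.+1])) ->
  (forall i, g (phi i) = phi (2 * i)) ->
  (forall i, C (phi i)) -> (forall y, C y -> exists i, y = phi i) ->
  iso_cycT g C s.+1.
Proof.
move=> phi_eq g_phi C_phi C_range.
exists (phi \o vert_code s); split.
- move=> v1 v2 v1T v2T /eqP /=.
  rewrite phi_eq !modn_small ?vert_code_lt // => /eqP.
  exact: vert_code_inj.
- by move=> v _; apply: C_phi.
- move=> y /C_range [i ->].
  have [v vT Ev] := vert_code_surj (ltn_pmod i (expn_gt0 2 s.+1)).
  by exists v => //=; apply/eqP; rewrite Ev phi_eq modn_mod.
- by move=> v vT /=; rewrite g_phi; apply/eqP; rewrite phi_eq vert_code_map.
Qed.

Local Open Scope ring_scope.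

Lemma fcomp_sym (T : finType) (g : T -> T) : symmetric (fcomp g).
Proof. by apply: sym_connect_sym => u v /=; rewrite orbC. Qed.

Lemma fcomp_edge (T : finType) (g : T -> T) x : fcomp g x (g x).
Proof. by apply: connect1; rewrite /= eqxx. Qed.

Lemma fcomp_invariant (T : finType) (g : T -> T) (A : pred T) :
  (forall x, A x = A (g x)) -> forall x y, fcomp g x y -> A x = A y.
Proof.
move=> gA x y; apply: closed_connect => u v /orP[] /eqP <-; first exact: gA.
by rewrite -!topredE /= -gA.
Qed.

Lemma exists_prim_root (L : finFieldType) n :
  (n %| #|L|.-1)%N -> exists w : L, n.-primitive_root w.
Proof.
have L_gt1 := finNzRing_gt1 L.
have L1_gt0 : (0 < #|L|.-1)%N by rewrite -subn1 subn_gt0.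
have units_root : all #|L|.-1.-unity_root (enum [pred x : L | x != 0]).
  apply/allP => x; rewrite mem_enum inE => x_neq0; rewrite unity_rootE.
  by apply/eqP/(mulIf x_neq0); rewrite mul1r -exprSr prednK ?expf_card // ltnW.
have size_units : (#|L|.-1 <= size (enum [pred x : L | x != 0%R]))%N.
  by rewrite -cardE cardC1.
have /hasP[g _ g_prim] := has_prim_root L1_gt0 units_root (enum_uniq _) size_units.
by move=> n_dvd; exists (g ^+ (#|L|.-1 %/ n)); apply: dvdn_prim_root.
Qed.

Lemma prim_root_2pow_half (F : fieldType) s (w : F) :
  (2 ^ s.+1).-primitive_root w -> w ^+ (2 ^ s) = -1.
Proof.
move=> w_prim; have /eqP : (w ^+ (2 ^ s)) ^+ 2 = 1.
  by rewrite -exprM -expnSr prim_expr_order.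
rewrite sqrf_eq1 => /orP[w_half1 | /eqP //].
have := prim_order_dvd w_prim (2 ^ s); rewrite w_half1 => /dvdn_leq.
by rewrite expn_gt0 leq_exp2l // ltnn => /(_ isT).
Qed.

Definition norm_sq_map (R : ringType) (q : nat) (a x : R) : R :=
  x ^+ q.+1 + a * x ^+ 2.

(** * The subfield Fq of a field of order q^2 and the map x |-> x^(q+1) + a x^2 *)

Section Subfield.
Variables (L : finFieldType) (q : nat).
Hypotheses (q_odd : odd q) (cardL : #|L| = (q ^ 2)%N).

Local Notation Fq := (@inFq L q).

Lemma pnat_pchar_q : [pchar L].-nat q.
Proof.
have [p _ p_char] := finPcharP L.
have /= := abelem_pgroup (fin_ring_pchar_abelem p_char).
rewrite /pgroup cardsT cardL (eq_pnat _ (pcharf_eq p_char)) => p_q2.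
by apply: pnat_dvd p_q2; rewrite dvdn_mull.
Qed.

Lemma frobD (x y : L) : (x + y) ^+ q = x ^+ q + y ^+ q.
Proof. exact: exprDn_pchar pnat_pchar_q. Qed.

Lemma frobK (x : L) : (x ^+ q) ^+ q = x.
Proof. by rewrite -exprM mulnn -cardL expf_card. Qed.

Lemma q_gt1 : (1 < q)%N.
Proof. by have := finNzRing_gt1 L; rewrite cardL; case: q => [|[|]]. Qed.

Lemma frobN (x : L) : (- x) ^+ q = - x ^+ q.
Proof. by rewrite -mulN1r exprMn -signr_odd q_odd expr1 mulN1r. Qed.

Lemma inFqP x : reflect (x ^+ q = x) (x \in Fq).
Proof. exact: eqP. Qed.

Fact inFq_divring_closed : GRing.divring_closed Fq.
Proof.
split; first exact/inFqP/expr1n.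
  by move=> x y /inFqP x_q /inFqP y_q; apply/inFqP; rewrite frobD frobN x_q y_q.
by move=> x y /inFqP x_q /inFqP y_q; apply/inFqP; rewrite exprMn exprVn x_q y_q.
Qed.

HB.instance Definition _ := GRing.isDivringClosed.Build L Fq inFq_divring_closed.

Lemma eqrN_eq0 (x : L) : (x == - x) = (x == 0).
Proof.
have two_neq0 : (2%:R : L) != 0.
  apply: contraTneq q_odd => two_eq0.
  have two_char : 2%N \in [pchar L] by rewrite inE /= two_eq0 eqxx.
  have /p_natP[k q_k] := etrans (esym (eq_pnat _ (pcharf_eq two_char))) pnat_pchar_q.
  have := q_gt1; rewrite q_k; case: k {q_k} => [|k] //.
  by rewrite expnS oddM.
by rewrite -subr_eq0 opprK -mulr2n -mulr_natl mulf_eq0 (negbTE two_neq0).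
Qed.

Lemma skew_Fq_eq0 x : x ^+ q = - x -> x \in Fq -> x = 0.
Proof. by move=> x_skew /inFqP; rewrite x_skew => /esym/eqP; rewrite eqrN_eq0 => /eqP. Qed.

Lemma frob_scaled_sqr1 (k z : L) : k \in Fq -> z != 0 -> z ^+ q = k * z -> k ^+ 2 = 1.
Proof.
move=> /inFqP k_q z_neq0 z_q; apply: (mulIf z_neq0); rewrite mul1r.
by rewrite -{2}(frobK z) z_q exprMn k_q z_q mulrA expr2.
Qed.

Lemma card_pred : #|L|.-1 = (q.-1 * q.+1)%N.
Proof. by rewrite cardL; case: q q_gt1 => // n _; lia. Qed.

Lemma Fq_sqrt t : t \in Fq -> t != 0 -> exists y : L, y ^+ 2 = t.
Proof.
move=> /inFqP t_q t_neq0; have [g g_prim] := exists_prim_root (dvdnn #|L|.-1).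
have pow_eq1 n : (0 < n)%N -> t ^+ n = t -> t ^+ n.-1 = 1.
  by move=> n_gt0 t_n; apply: (mulIf t_neq0); rewrite mul1r -exprSr prednK.
have [[k _] /= t_k] := prim_rootP g_prim (pow_eq1 _ (ltnW (finNzRing_gt1 L)) (expf_card t)).
have : (#|L|.-1 %| k * q.-1)%N.
  by rewrite (prim_order_dvd g_prim) exprM -t_k pow_eq1 // ltnW ?q_gt1.
rewrite card_pred [(k * _)%N]mulnC dvdn_pmul2l -?subn1 ?subn_gt0 ?q_gt1 // => q1_dvd_k.
have two_dvd_k : (2 %| k)%N by apply: dvdn_trans q1_dvd_k; rewrite dvdn2 /= negbK.
by exists (g ^+ (k %/ 2)); rewrite t_k -exprM divnK.
Qed.

Lemma nonsquare_sqrt_skew t y : t \in Fq -> (forall b, b \in Fq -> b ^+ 2 != t) ->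
  y ^+ 2 = t -> y ^+ q = - y.
Proof.
move=> /inFqP t_q t_nsq y_t.
have /eqP : (y ^+ q) ^+ 2 = y ^+ 2 by rewrite exprAC y_t t_q.
rewrite eqf_sqr => /orP[y_Fq | /eqP //].
by have := t_nsq y y_Fq; rewrite y_t eqxx.
Qed.

Lemma chi2_eqN1 t :
  chi2 q t = -1 <-> t != 0 /\ (forall b, b \in Fq -> b ^+ 2 != t).
Proof.
rewrite /chi2; have [-> | t_neq0] := eqVneq t 0; first by split=> [|[]].
split=> [|[_ t_nsq]].
  case: existsP => // t_nsq _; split=> // b b_Fq; apply: contra_notN t_nsq => b_t.
  by exists b; apply/andP; split=> //; apply/eqP.
by case: existsP => // -[b /andP[b_Fq b_t]]; have := t_nsq b b_Fq; rewrite b_t.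
Qed.

Lemma chi2_eq1 t : chi2 q t = 1 -> exists2 b, b \in Fq & b ^+ 2 = t.
Proof.
rewrite /chi2; case: eqP => // _.
by case: existsP => // -[b /andP[b_Fq /eqP b_t]] _; exists b.
Qed.

Lemma skew_div_Fq x y : x ^+ q = - x -> y ^+ q = - y -> x / y \in Fq.
Proof. by move=> x_q y_q; apply/inFqP; rewrite exprMn exprVn x_q y_q invrN mulrNN. Qed.

Lemma Fq_sqr_neqN1 r x : odd r -> q.-1 = (2 * r)%N -> x \in Fq -> x ^+ 2 != -1.
Proof.
move=> r_odd q_pred /inFqP x_q; apply/eqP => x_sqr.
have x_neq0 : x != 0 by apply: contra_eq_neq x_sqr => ->; rewrite expr0n eq_sym oppr_eq0 oner_eq0.
have : x ^+ q.-1 = 1.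
  by apply: (mulIf x_neq0); rewrite mul1r -exprSr prednK ?x_q // ltnW ?q_gt1.
rewrite q_pred exprM x_sqr -signr_odd r_odd expr1 => /eqP.
by rewrite eq_sym eqrN_eq0 oner_eq0.
Qed.

Lemma frob_skew_pow (x : L) j : x ^+ q = - x -> (x ^+ j) ^+ q = (-1) ^+ j * x ^+ j.
Proof. by move=> x_skew; rewrite exprAC x_skew [in LHS]exprNn. Qed.

Lemma prim_root_skew s r (w : L) : odd r -> q.-1 = (2 ^ s * r)%N ->
  (2 ^ s.+1).-primitive_root w -> w ^+ q = - w.
Proof.
move=> r_odd q_pred w_prim; rewrite -(prednK (ltnW q_gt1)) q_pred exprS exprM.
by rewrite prim_root_2pow_half // -signr_odd r_odd expr1 mulrN1.
Qed.

Section Map.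
Variable a : L.
Hypotheses (a_Fq : a \in Fq) (a_neq0 : a != 0) (a_neq1 : a != 1) (a_neqN1 : a != -1).

Local Notation f := (norm_sq_map q a).

Lemma aD1_neq0 : a + 1 != 0. Proof. by rewrite addr_eq0. Qed.
Lemma aB1_neq0 : a - 1 != 0. Proof. by rewrite subr_eq0. Qed.
Lemma aB1_Fq : a - 1 \in Fq. Proof. by rewrite rpredB ?rpred1. Qed.

Lemma fE x : f x = x ^+ q * x + a * x ^+ 2.
Proof. by rewrite /norm_sq_map exprSr. Qed.

Lemma f_Fq x : x \in Fq -> f x = (a + 1) * x ^+ 2.
Proof. by move=> /inFqP x_q; rewrite fE x_q; ring. Qed.

Lemma f_skew x : x ^+ q = - x -> f x = (a - 1) * x ^+ 2.
Proof. by move=> x_q; rewrite fE x_q; ring. Qed.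

Lemma Fq_f x : x \in Fq -> f x \in Fq.
Proof. by move=> x_Fq; rewrite f_Fq // rpredM ?rpredD ?rpred1 ?rpredX. Qed.

Lemma frob_f x : (f x) ^+ q = x * x ^+ q + a * (x ^+ q) ^+ 2.
Proof. by rewrite fE frobD !exprMn (eqP a_Fq) frobK -expr2. Qed.

Lemma f_in_Fq x : (f x \in Fq) = (x \in Fq) || (x ^+ q == - x).
Proof.
rewrite unfold_in /inFq frob_f fE [x * _]mulrC (inj_eq (addrI _)).
by rewrite (inj_eq (mulfI a_neq0)) eqf_sqr.
Qed.

Lemma f_eq0 z : (f z == 0) = (z == 0).
Proof.
apply/idP/idP => [/eqP fz0 | /eqP ->]; last by rewrite /norm_sq_map !expr0n mulr0 addr0.
have : f z \in Fq by rewrite fz0 rpred0.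
rewrite f_in_Fq => /orP[z_Fq | /eqP z_skew].
  by move: fz0; rewrite f_Fq // => /eqP; rewrite mulf_eq0 (negbTE aD1_neq0) expf_eq0.
by move: fz0; rewrite f_skew // => /eqP; rewrite mulf_eq0 (negbTE aB1_neq0) expf_eq0.
Qed.

Lemma component0 y : fcomp f 0 y -> y = 0.
Proof.
move=> /(fcomp_invariant (A := pred1 0)) /=; rewrite eqxx => y0.
by apply/eqP; rewrite -y0 // => x; rewrite -f_eq0.
Qed.

Variable b : L.
Hypotheses (b_Fq : b \in Fq) (b_sqr : b ^+ 2 = 1 - a ^+ 2).

Lemma f_neq_skew y z : y ^+ q = - y -> y != 0 -> f z != y.
Proof.
move=> y_skew y_neq0; apply/eqP => fz_y.
have z_neq0 : z != 0 by rewrite -(f_eq0 z) fz_y.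
have fz_skew : z * z ^+ q + a * (z ^+ q) ^+ 2 = - (z ^+ q * z + a * z ^+ 2).
  by rewrite -frob_f -fE fz_y.
set w := z ^+ q in fz_skew *.
have sqr_eq : (a * w + z) ^+ 2 == (b * z) ^+ 2.
  rewrite -subr_eq0 exprMn b_sqr.
  have -> : (a * w + z) ^+ 2 - (1 - a ^+ 2) * z ^+ 2 =
            a * (z * w + a * w ^+ 2 + (w * z + a * z ^+ 2)) by ring.
  by rewrite fz_skew addNr mulr0.
have [k k_Fq w_kz] : exists2 k, k \in Fq & w = k * z.
  move: sqr_eq; rewrite eqf_sqr => /orP[] /eqP w_z; [exists ((b - 1) / a) | exists ((- b - 1) / a)];
    rewrite ?rpred_div ?rpredB ?rpredN ?rpred1 //;
    by rewrite -(mulKf a_neq0 w) -(addrK z (a * w)) w_z; field.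
have /eqP := frob_scaled_sqr1 k_Fq z_neq0 w_kz.
rewrite sqrf_eq1 => k_pm1.
have : f z \in Fq.
  rewrite f_in_Fq; apply/orP; case/orP: k_pm1 => /eqP k1; [left; apply/inFqP | right];
    by rewrite -/w w_kz k1 ?mul1r ?mulN1r.
by rewrite fz_y => y_Fq; move: y_neq0; rewrite (skew_Fq_eq0 y_skew y_Fq) eqxx.
Qed.

Lemma f_in_Fq_f x : (f x \in Fq) = (f (f x) \in Fq).
Proof.
apply/idP/idP => [/Fq_f // | ]; rewrite f_in_Fq => /orP[// | /eqP fx_skew].
have [-> | fx_neq0] := eqVneq (f x) 0; first exact: rpred0.
by have := f_neq_skew x fx_skew fx_neq0; rewrite eqxx.
Qed.

Lemma component_Fq_skew x y : x \in Fq -> fcomp f x y -> y \notin Fq ->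
  [/\ f y \in Fq, chi2 q (f y * (a - 1)) = -1 & forall z, f z != y].
Proof.
move=> x_Fq xy y_nFq.
have fy_Fq : f y \in Fq by rewrite -(fcomp_invariant f_in_Fq_f xy) Fq_f.
have y_skew : y ^+ q = - y.
  by move: fy_Fq; rewrite f_in_Fq => /orP[y_Fq | /eqP //]; case/negP: y_nFq.
have y_neq0 : y != 0 by apply: contraNneq y_nFq => ->; apply: rpred0.
split=> //; last by move=> z; apply: f_neq_skew.
apply/chi2_eqN1; split; first by rewrite f_skew // !mulf_neq0 ?expf_neq0 ?aB1_neq0.
move=> u u_Fq; apply: contraNneq y_nFq => u_sqr.
have /eqP : (u / (a - 1)) ^+ 2 = y ^+ 2.
  by rewrite expr_div_n u_sqr f_skew //; field; apply: aB1_neq0.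
have ua_Fq : u / (a - 1) \in Fq := rpred_div u_Fq aB1_Fq.
by rewrite eqf_sqr => /orP[] /eqP u_y; [rewrite -u_y | rewrite -[y]opprK rpredN -u_y].
Qed.

Lemma card_skew_preimages al : al \in Fq -> chi2 q (al * (a - 1)) = -1 ->
  #|[set y | y \notin Fq & f y == al]| = 2%N.
Proof.
move=> al_Fq /chi2_eqN1[al_a_neq0 al_a_nsq].
set t := al / (a - 1).
have t_Fq : t \in Fq := rpred_div al_Fq aB1_Fq.
have t_neq0 : t != 0.
  by rewrite mulf_neq0 ?invr_eq0 ?aB1_neq0 //; apply: contraNneq al_a_neq0 => ->; rewrite mul0r.
have t_nsq u : u \in Fq -> u ^+ 2 != t.
  move=> u_Fq; apply: contraNneq (al_a_nsq _ (rpredM u_Fq aB1_Fq)).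
  by rewrite exprMn => ->; apply/eqP; rewrite /t; field; apply: aB1_neq0.
have [y0 y0_t] := Fq_sqrt t_Fq t_neq0.
have -> : [set y | y \notin Fq & f y == al] = [set y0; - y0].
  apply/setP => y; rewrite !inE -eqf_sqr y0_t.
  apply/andP/eqP => [[y_nFq /eqP fy_al] | y_t].
    have : f y \in Fq by rewrite fy_al.
    rewrite f_in_Fq => /orP[y_Fq | /eqP y_skew]; first by case/negP: y_nFq.
    by rewrite /t -fy_al f_skew //; field; apply: aB1_neq0.
  have y_skew := nonsquare_sqrt_skew t_Fq t_nsq y_t.
  have y_neq0 : y != 0 by apply: contra_eq_neq y_t => ->; rewrite expr0n eq_sym.
  split; first by apply: contra y_neq0 => /(skew_Fq_eq0 y_skew) ->.
  by rewrite f_skew // y_t /t; apply/eqP; field; apply: aB1_neq0.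
have y0_neq0 : y0 != 0 by apply: contra_eq_neq y0_t => ->; rewrite expr0n eq_sym.
by rewrite cards2 eqrN_eq0 y0_neq0.
Qed.

Local Notation c := (a + 1)^-1.

Lemma c_Fq : c \in Fq. Proof. by rewrite rpredV rpredD ?rpred1. Qed.
Lemma c_neq0 : c != 0. Proof. by rewrite invr_eq0 aD1_neq0. Qed.

Lemma aD1_c_sqr : (a + 1) * c ^+ 2 = c.
Proof. by rewrite expr2 mulrA mulfV ?aD1_neq0 ?mul1r. Qed.

Lemma f_c : f c = c.
Proof. by rewrite f_Fq ?c_Fq ?aD1_c_sqr. Qed.

Section ValuationOne.
Variable r : nat.
Hypotheses (r_odd : odd r) (q_pred : q.-1 = (2 * r)%N).
Variable d : L.
Hypothesis d_sqr : (a - 1) * d ^+ 2 = c.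

Lemma d_skew : d ^+ q = - d.
Proof.
have d_sqrE : d ^+ 2 = c / (a - 1) by rewrite -d_sqr mulrAC mulfV ?aB1_neq0 ?mul1r.
apply: (nonsquare_sqrt_skew (t := d ^+ 2)) => //.
  by rewrite d_sqrE (rpred_div c_Fq aB1_Fq).
move=> x x_Fq; apply: contraTneq (Fq_sqr_neqN1 r_odd q_pred (rpredM x_Fq b_Fq)) => x_d.
rewrite exprMn x_d b_sqr d_sqrE negbK; apply/eqP; field.
by rewrite aB1_neq0 aD1_neq0.
Qed.

Lemma d_neq0 : d != 0.
Proof. by apply: contra_eq_neq d_sqr => ->; rewrite expr0n mulr0 eq_sym c_neq0. Qed.

Lemma Nd_skew : (- d) ^+ q = - - d.
Proof. by rewrite frobN d_skew. Qed.

Lemma Nd_neq0 : - d != 0.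
Proof. by rewrite oppr_eq0 d_neq0. Qed.

Lemma f_eq_c z : (f z == c) = (z \in [:: c; - c; d; - d]).
Proof.
apply/eqP/idP => [fz_c | ]; last first.
  rewrite !inE => /or4P[] /eqP ->.
  - exact: f_c.
  - by rewrite f_Fq ?rpredN ?c_Fq // sqrrN aD1_c_sqr.
  - by rewrite f_skew ?d_skew.
  - by rewrite f_skew ?Nd_skew // sqrrN.
have : f z \in Fq by rewrite fz_c c_Fq.
rewrite f_in_Fq !inE => /orP[z_Fq | /eqP z_skew].
  have /eqP : z ^+ 2 = c ^+ 2 by apply: (mulfI aD1_neq0); rewrite -f_Fq // fz_c aD1_c_sqr.
  by rewrite eqf_sqr => /orP[] ->; rewrite ?orbT.
have /eqP : z ^+ 2 = d ^+ 2 by apply: (mulfI aB1_neq0); rewrite -f_skew // fz_c d_sqr.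
by rewrite eqf_sqr => /orP[] ->; rewrite ?orbT.
Qed.

Lemma f_neq_Nc z : f z != - c.
Proof.
apply/eqP => fz_Nc.
have : f z \in Fq by rewrite fz_Nc rpredN c_Fq.
rewrite f_in_Fq => /orP[z_Fq | /eqP z_skew].
  have : z / c \in Fq by rewrite rpred_div ?c_Fq.
  move/(Fq_sqr_neqN1 r_odd q_pred); apply/negP; rewrite negbK expr_div_n.
  have -> : z ^+ 2 = - c ^+ 2 by apply: (mulfI aD1_neq0); rewrite -f_Fq // fz_Nc mulrN aD1_c_sqr.
  by rewrite mulNr mulfV ?expf_neq0 ?c_neq0.
move/(Fq_sqr_neqN1 r_odd q_pred): (skew_div_Fq z_skew d_skew); apply/negP; rewrite negbK expr_div_n.
have -> : z ^+ 2 = - d ^+ 2 by apply: (mulfI aB1_neq0); rewrite -f_skew // fz_Nc mulrN d_sqr.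
by rewrite mulNr mulfV ?expf_neq0 ?d_neq0.
Qed.

Lemma component_c_of_sqrt : exists y1 y2 y3 : L,
  [/\ uniq [:: c; y1; y2; y3],
      (forall y, fcomp f c y = (y \in [:: c; y1; y2; y3])),
      [/\ f y1 = c, f y2 = c & f y3 = c] &
      (forall z, [/\ f z != y1, f z != y2 & f z != y3])].
Proof.
have f_eq_c' z : z \in [:: c; - c; d; - d] -> f z = c by rewrite -f_eq_c => /eqP.
have d_nFq : d \notin Fq by apply: contra d_neq0 => /(skew_Fq_eq0 d_skew) ->.
have Nd_nFq : - d \notin Fq by rewrite rpredN.
exists (- c), d, (- d); split.
- have Nc_Fq : - c \in Fq by rewrite rpredN c_Fq.
  have neq x y : x \in Fq -> y \notin Fq -> x != y by move=> ?; apply: contraNneq => <-.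
  rewrite /= !inE !negb_or (eqrN_eq0 c) (eqrN_eq0 d) c_neq0 d_neq0.
  rewrite (neq _ _ c_Fq d_nFq) (neq _ _ c_Fq Nd_nFq).
  by rewrite (neq _ _ Nc_Fq d_nFq) (neq _ _ Nc_Fq Nd_nFq).
- move=> y; apply/idP/idP => [c_y | /f_eq_c' fy_c]; last by rewrite fcomp_sym -fy_c fcomp_edge.
  suff S_inv x : (x \in [:: c; - c; d; - d]) = (f x \in [:: c; - c; d; - d]).
    by have /= <- := fcomp_invariant (A := fun x => x \in [:: c; - c; d; - d]) S_inv c_y;
      rewrite inE eqxx.
  apply/idP/idP => [/f_eq_c' -> | ]; first by rewrite inE eqxx.
  rewrite -(f_eq_c x) !inE => /or4P[// | /eqP fx_Nc | /eqP fx_d | /eqP fx_Nd].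
  + by case/eqP: (f_neq_Nc x).
  + by case/eqP: (f_neq_skew x d_skew d_neq0).
  + by case/eqP: (f_neq_skew x Nd_skew Nd_neq0).
- by rewrite !f_eq_c' ?inE ?eqxx ?orbT.
- move=> z; split; first exact: f_neq_Nc.
  + exact: f_neq_skew d_skew d_neq0.
  + exact: f_neq_skew Nd_skew Nd_neq0.
Qed.

End ValuationOne.

Section ValuationAtLeastTwo.
Variables (s : nat) (w e : L).
Hypotheses (w_prim : (2 ^ s.+1).-primitive_root w) (w_skew : w ^+ q = - w).
Hypotheses (e_Fq : e \in Fq) (e_sqr : (a - 1) * e ^+ 2 = c).

Local Notation M := (2 ^ s.+1)%N.

Definition psi j := (if odd j then e else c) * w ^+ j.

Lemma psi0 : psi 0 = c.
Proof. by rewrite /psi expr0 mulr1. Qed.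

Lemma w_neq0 : w != 0.
Proof. by rewrite (prim_root_eq0 w_prim) expn_eq0. Qed.

Lemma e_neq0 : e != 0.
Proof. by apply: contra_eq_neq e_sqr => ->; rewrite expr0n mulr0 eq_sym c_neq0. Qed.

Lemma w_pow_Fq j : (w ^+ j \in Fq) = ~~ odd j.
Proof.
apply/inFqP/idP; rewrite frob_skew_pow // -signr_odd.
  case: (odd j) => // /esym/eqP; rewrite expr1 mulN1r eqrN_eq0.
  by rewrite expf_eq0 (negbTE w_neq0) andbF.
by move/negbTE => ->; rewrite mul1r.
Qed.

Lemma w_pow_skew j : odd j -> (w ^+ j) ^+ q = - w ^+ j.
Proof. by move=> j_odd; rewrite frob_skew_pow // -signr_odd j_odd mulN1r. Qed.

Lemma psi_neq0 j : psi j != 0.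
Proof. by rewrite mulf_neq0 ?expf_neq0 ?w_neq0 //; case: ifP => _; rewrite ?e_neq0 ?c_neq0. Qed.

Lemma psi_skew j : odd j -> psi j ^+ q = - psi j.
Proof. by move=> j_odd; rewrite /psi j_odd exprMn (eqP e_Fq) w_pow_skew ?mulrN. Qed.

Lemma psi_Fq j : (psi j \in Fq) = ~~ odd j.
Proof.
case: (boolP (odd j)) => j_odd /=.
  by apply: contraTF (psi_neq0 j) => /(skew_Fq_eq0 (psi_skew j_odd)) ->; rewrite eqxx.
by rewrite /psi (negbTE j_odd) rpredM ?c_Fq ?w_pow_Fq.
Qed.

Lemma psi_eq i j : (psi i == psi j) = (i == j %[mod M]).
Proof.
have odd_mod k : odd k = odd (k %% M).
  by rewrite {1}(divn_eq k M) oddD oddM oddX andbF.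
apply/eqP/eqP => [psi_ij | ij].
  have ij_odd : odd i = odd j by rewrite -[odd i]negbK -[odd j]negbK -!psi_Fq psi_ij.
  move: psi_ij; rewrite /psi ij_odd => /mulfI coef_inj.
  apply/eqP; rewrite -(eq_prim_root_expr w_prim); apply/eqP/coef_inj.
  by case: ifP => _; rewrite ?e_neq0 ?c_neq0.
by rewrite /psi odd_mod ij -odd_mod; congr (_ * _); apply/eqP; rewrite (eq_prim_root_expr w_prim) ij.
Qed.

Lemma f_psi j : f (psi j) = psi (2 * j).
Proof.
have psi2E : psi (2 * j) = c * (w ^+ j) ^+ 2 by rewrite /psi oddM /= -exprM mulnC.
case: (boolP (odd j)) => j_odd.
  by rewrite f_skew ?psi_skew // psi2E /psi j_odd exprMn mulrA e_sqr.
by rewrite f_Fq ?psi_Fq // psi2E /psi (negbTE j_odd) exprMn mulrA aD1_c_sqr.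
Qed.

Lemma sqr_eq_w_pow u j : ~~ odd j -> u ^+ 2 = w ^+ j -> exists k, u = w ^+ k.
Proof.
move=> j_even u_sqr; suff /(prim_rootP w_prim)[k ->] : u ^+ M = 1 by exists k.
rewrite expnS exprM u_sqr -exprM; apply/eqP; rewrite -(prim_order_dvd w_prim).
by rewrite expnS dvdn_pmul2r ?expn_gt0 // dvdn2.
Qed.

Lemma f_eq_psi z j : f z = psi j -> exists k, z = psi k.
Proof.
move=> fz_psi; have [j_odd | j_even] := boolP (odd j).
  by case/eqP: (f_neq_skew z (psi_skew j_odd) (psi_neq0 j)).
have psiE : psi j = c * w ^+ j by rewrite /psi (negbTE j_even).
have scaled_root u : u \in Fq -> u != 0 -> z ^+ 2 = u ^+ 2 * w ^+ j ->
    exists2 k, z = u * w ^+ k & (z \in Fq) = ~~ odd k.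
  move=> u_Fq u_neq0 z_sqr.
  have [k zu_k] : exists k, z / u = w ^+ k.
    by apply: sqr_eq_w_pow j_even _; rewrite expr_div_n z_sqr mulrC mulKf ?expf_neq0.
  have z_uk : z = u * w ^+ k by rewrite -zu_k mulrC divfK.
  by exists k; rewrite // z_uk rpredMl ?unitfE ?w_pow_Fq.
have : f z \in Fq by rewrite fz_psi psi_Fq.
rewrite f_in_Fq => /orP[z_Fq | /eqP z_skew].
  have [|k z_k z_Fq_k] := scaled_root c c_Fq c_neq0.
    by apply: (mulfI aD1_neq0); rewrite -f_Fq // fz_psi psiE mulrA aD1_c_sqr.
  by exists k; rewrite /psi -[odd k]negbK -z_Fq_k z_Fq.
have z_neq0 : z != 0 by rewrite -(f_eq0 z) fz_psi psi_neq0.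
have [|k z_k z_Fq_k] := scaled_root e e_Fq e_neq0.
  by apply: (mulfI aB1_neq0); rewrite -f_skew // fz_psi psiE mulrA e_sqr.
have k_odd : odd k.
  by rewrite -[odd k]negbK -z_Fq_k; apply: contra z_neq0 => /(skew_Fq_eq0 z_skew) ->.
by exists k; rewrite /psi k_odd.
Qed.

Lemma fcomp_c_psi j : fcomp f c (psi j).
Proof.
have fcomp_pow n : fcomp f (psi j) (psi (2 ^ n * j)).
  elim: n => [|n IHn]; first by rewrite mul1n; apply: connect0.
  by apply: connect_trans IHn _; rewrite expnS -mulnA -f_psi; apply: fcomp_edge.
rewrite fcomp_sym -psi0; suff <- : psi (2 ^ s.+1 * j) = psi 0 by apply: fcomp_pow.
by apply/eqP; rewrite psi_eq modnMr mod0n.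
Qed.

Lemma fcomp_c_psi_range y : fcomp f c y -> exists j, y = psi j.
Proof.
pose in_range x := [exists k : 'I_M, x == psi k].
have in_rangeP x : reflect (exists j, x = psi j) (in_range x).
  apply: (iffP existsP) => [[k /eqP ->] | [j ->]]; first by exists k.
  by exists (Ordinal (ltn_pmod j (expn_gt0 2 s.+1))); rewrite psi_eq /= modn_mod.
move=> c_y; apply/in_rangeP; rewrite -(fcomp_invariant (A := in_range) _ c_y).
  by apply/in_rangeP; exists 0%N; rewrite psi0.
move=> x; apply/in_rangeP/in_rangeP => [[j ->] | [j /f_eq_psi //]].
by exists (2 * j)%N; rewrite f_psi.
Qed.

Lemma iso_component_c_of_root : iso_cycT f (fcomp f c) s.+1.
Proof.
exact: iso_cycT_doubling psi_eq f_psi fcomp_c_psi fcomp_c_psi_range.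
Qed.

End ValuationAtLeastTwo.

Lemma component_c_val1 r : odd r -> q.-1 = (2 * r)%N -> exists y1 y2 y3 : L,
  [/\ uniq [:: c; y1; y2; y3],
      (forall y, fcomp f c y = (y \in [:: c; y1; y2; y3])),
      [/\ f y1 = c, f y2 = c & f y3 = c] &
      (forall z, [/\ f z != y1, f z != y2 & f z != y3])].
Proof.
move=> r_odd q_pred.
have ca_Fq : c / (a - 1) \in Fq := rpred_div c_Fq aB1_Fq.
have ca_neq0 : c / (a - 1) != 0 := mulf_neq0 c_neq0 (invr_neq0 aB1_neq0).
have [d d_sqr] := Fq_sqrt ca_Fq ca_neq0.
apply: (component_c_of_sqrt r_odd q_pred (d := d)).
by rewrite d_sqr mulrC mulfVK ?aB1_neq0.
Qed.

Lemma iso_component_c_val2 s r : odd r -> q.-1 = (2 ^ s * r)%N -> (2 <= s)%N ->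
  iso_cycT f (fcomp f c) s.+1.
Proof.
move=> r_odd q_pred s_ge2.
have [w w_prim] : exists w : L, (2 ^ s.+1).-primitive_root w.
  apply: exists_prim_root; rewrite card_pred q_pred expnSr -mulnA dvdn_pmul2l ?expn_gt0 //.
  by rewrite dvdn_mull // dvdn2 /= negbK.
have w_skew := prim_root_skew r_odd q_pred w_prim.
set i := w ^+ (2 ^ s.-1).
have i_sqr : i ^+ 2 = -1.
  by rewrite -exprM -expnSr prednK ?(prim_root_2pow_half w_prim) // (leq_trans _ s_ge2).
have i_Fq : i \in Fq.
  by rewrite (w_pow_Fq w_prim w_skew) oddX orbF -lt0n -subn1 subn_gt0.
apply: (iso_component_c_of_root w_prim w_skew (e := (i * b)^-1)).
  by rewrite rpredV rpredM.
rewrite exprVn exprMn i_sqr b_sqr.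
have -> : -1 * (1 - a ^+ 2) = (a - 1) * (a + 1) by ring.
by rewrite invfM mulrA mulfV ?aB1_neq0 ?mul1r.
Qed.

End Map.

End Subfield.

Theorem theorem22 (L : finFieldType) (q s r : nat) (a : L) :
  odd q -> #|L| = (q ^ 2)%N ->
  odd r -> q.-1 = (2 ^ s * r)%N ->
  inFq q a -> a != 0 -> a != 1 -> a != -1 ->
  chi2 q (1 - a ^+ 2) = 1 ->
  let f := fun x : L => x ^+ q.+1 + a * x ^+ 2 in
  let U := fun y : L => [exists x, inFq q x && fcomp f x y] in
  let c := (a + 1)^-1 in
  (forall x, inFq q x -> inFq q (f x) /\ f x = (a + 1) * x ^+ 2) /\
      (forall y, U y -> ~~ inFq q y ->
         [/\ inFq q (f y), chi2 q (f y * (a - 1)) = -1 & forall z, f z != y]) /\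
      (forall al, inFq q al -> chi2 q (al * (a - 1)) = -1 ->
         #|[set y | ~~ inFq q y & f y == al]| = 2%N) /\
      (f 0 = 0 /\ forall y, fcomp f 0 y -> y = 0) /\
      f c = c /\
      ((s = 1)%N -> exists y1 y2 y3 : L,
         [/\ uniq [:: c; y1; y2; y3],
             (forall y, fcomp f c y = (y \in [:: c; y1; y2; y3])),
             [/\ f y1 = c, f y2 = c & f y3 = c] &
             (forall z, [/\ f z != y1, f z != y2 & f z != y3])]) /\
      ((2 <= s)%N -> iso_cycT f (fcomp f c) s.+1).
Proof.
move=> q_odd cardL r_odd q_pred a_Fq a_neq0 a_neq1 a_neqN1 /chi2_eq1[b b_Fq b_sqr] f U c.
split; first by move=> x x_Fq; split; [apply: Fq_f | apply: f_Fq].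
split.
  move=> y /existsP[x /andP[x_Fq x_y]].
  exact: (component_Fq_skew q_odd cardL a_Fq a_neq0 a_neq1 a_neqN1 b_Fq b_sqr x_Fq x_y).
split; first exact: (card_skew_preimages q_odd cardL a_Fq a_neq0 a_neq1).
split; first by split; [apply/eqP; rewrite f_eq0 | apply: component0].
split; first exact: (f_c q_odd cardL a_Fq).
split=> [s_eq1 | s_ge2].
  apply: (component_c_val1 q_odd cardL a_Fq a_neq0 a_neq1 a_neqN1 b_Fq b_sqr r_odd).
  by rewrite q_pred s_eq1 expn1.
exact: (iso_component_c_val2 q_odd cardL a_Fq a_neq0 a_neq1 a_neqN1 b_Fq b_sqr r_odd q_pred s_ge2).
Qed.
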